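(* Let $c$ and $z$ be complex numbers and let $n$ be a positive integer. Then \[ \sum_{\pi \in \mathcal{D}(n)} (-1)^{\#(\pi)-1} \sum_{j=1}^{s(\pi)} \bigl(\ell(\pi) - s(\pi) + j\bigr)^z\, c^{\ell(\pi) - s(\pi) + j} = \sigma_{z,c}(n), \] where $\sigma_{z,c}(n) = \sum_{d \mid n} d^z c^d$.
   Context: For a positive integer $n$, $\mathcal{D}(n)$ denotes the set of all partitions of $n$ into distinct parts. For a partition $\pi$: $s(\pi)$ is its smallest part, $\ell(\pi)$ its largest part, and $\#(\pi)$ its number of parts. For a positive integer $m$ and complex $z$, $m^z = e^{z\log m}$ with the real logarithm. The sum $\sum_{d\mid n}$ runs over the positive divisors $d$ of $n$. *)

From Stdlib Require Import Reals.
From mathcomp Require Import all_boot all_order all_algebra.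
From mathcomp Require Import Rstruct.
From mathcomp Require Import complex.
Set Implicit Arguments. Unset Strict Implicit. Unset Printing Implicit Defensive.
Import Order.TTheory GRing.Theory Num.Theory.

(* m^z = e^{z log m} for a positive integer m and complex z, with the real
   logarithm, written out: e^{(a+ib) t} = e^{a t} (cos (b t) + i sin (b t)),
   t = ln m. *)
Definition natcpow (m : nat) (z : R[i]) : R[i] :=
  let t := ln (INR m) in
  Complex (exp (complex.Re z * t) * cos (complex.Im z * t))%R (exp (complex.Re z * t) * sin (complex.Im z * t))%R.

(* A partition of n into distinct parts is encoded as the set of its parts:
   a subset of {1,..,n} (as a subset of 'I_n.+1 avoiding 0) whose elements
   sum to n. *)
Definition is_distinct_partition (n : nat) (A : {set 'I_n.+1}) : bool :=
  (ord0 \notin A) && (\sum_(i in A) (i : nat) == n)%N.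

(* smallest part s(pi) (all parts are <= n, so n is a neutral upper bound) *)
Definition spart (n : nat) (A : {set 'I_n.+1}) : nat := \big[minn/n]_(i in A) (i : nat).
Definition lpart (n : nat) (A : {set 'I_n.+1}) : nat := \max_(i in A) (i : nat).
Definition nparts (n : nat) (A : {set 'I_n.+1}) : nat := #|A|.

Definition sigma_zc (z c : R[i]) (n : nat) : R[i] :=
  (\sum_(d <- divisors n) natcpow d z * c ^+ d)%R.

From Stdlib Require Import Reals.
From mathcomp Require Import all_boot all_order all_algebra.
From mathcomp Require Import Rstruct.
From mathcomp Require Import complex.
From mathcomp Require Import zify ring.
Set Implicit Arguments. Unset Strict Implicit. Unset Printing Implicit Defensive.
Import Order.TTheory GRing.Theory Num.Theory.
Local Open Scope ring_scope.

(* Exchanging the two sums, the left-hand side becomes \sum_m m^z c^m S_m(n),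
   where S_m(n) is the signed count (sign (-1)^(#pi-1)) of the partitions of n
   into distinct parts with l(pi) - s(pi) < m <= l(pi), i.e. whose parts lie in
   the window (l(pi) - m, l(pi)].  By inclusion-exclusion over the windows
   (a, a + m], the generating series of S_m is
     G = \sum_a X^(a+m) \prod_(a < i < a+m) (1 - X^i),
   which telescopes: (1 - X^m) G = X^m (1 - X^k) \prod_(k < i < k+m) (1 - X^i).
   Up to degree n this says G = X^m / (1 - X^m), so S_m(n) = [m | n]. *)

Section PartsPoly.
Variables (R : comNzRingType) (K : nat).
Implicit Types I : {set 'I_K}.

Definition parts_poly (I : {set 'I_K}) : {poly R} := \prod_(i in I) (1 - 'X^i).

Lemma coef_parts_poly I N : (parts_poly I)`_N =
  \sum_(J : {set 'I_K} | (J \subset I) && (\sum_(i in J) (i : nat) == N)%N)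
     (-1) ^+ #|J|.
Proof.
have expand : parts_poly I = \sum_(J : {set 'I_K} | J \subset I)
    (-1) ^+ #|J| *: 'X^(\sum_(i in J) (i : nat)).
  rewrite /parts_poly big_mkcond /=.
  rewrite (eq_bigr (fun i => (if i \in I then - 'X^i else 0) + 1)); last first.
    by move=> i _; case: ifP => _; rewrite ?addr0 ?add0r // addrC.
  rewrite bigA_distr /= [RHS]big_mkcond /=; apply: eq_bigr => J _.
  case: ifP => sJI.
    rewrite -(big_mkcond (fun i => i \in J)) /=.
    under eq_bigr => i iJ do rewrite ((subsetP sJI) i iJ).
    by rewrite prodrN -expr_sum -mul_polyC rmorphXn /= rmorphN rmorph1.
  have [i iJ iI] : exists2 i, i \in J & i \notin I by apply/subsetPn; rewrite sJI.
  by rewrite (bigD1 i) //= iJ (negbTE iI) mul0r.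
rewrite expand coef_sum big_mkcondr /=; apply: eq_bigr => J _.
by rewrite coefZ coefXn eq_sym; case: eqP; rewrite ?mulr1 ?mulr0.
Qed.

Lemma coef_parts_poly_small I N :
  {in I, forall i : 'I_K, N < i}%N -> (parts_poly I)`_N = (N == 0)%N%:R.
Proof.
move=> I_gtN; rewrite coef_parts_poly.
rewrite (eq_bigl (fun J : {set 'I_K} => (J == set0) && (N == 0)%N)); last first.
  move=> J; have [->|/set0Pn[i iJ]] := eqVneq J set0.
    by rewrite sub0set big_set0 eq_sym.
  apply/negbTE/negP => /andP[/subsetP sJI /eqP sumJ].
  have le_i_sum : (i <= \sum_(i in J) (i : nat))%N by rewrite (bigD1 i) //= leq_addr.
  by have := I_gtN i (sJI i iJ); lia.
case: (N =P 0%N) => [N0|_]; last by rewrite big_pred0 // => J; rewrite andbF.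
subst N.
by rewrite (big_pred1 set0) ?cards0 // => J; rewrite andbT.
Qed.

Variable m : nat.
Hypothesis m_gt0 : (0 < m)%N.

Definition window_oc a := [set i : 'I_K | (a < i <= a + m)%N].
Definition window_oo a := [set i : 'I_K | (a < i < a + m)%N].

Lemma parts_poly_oc_top a : (a + m < K)%N ->
  parts_poly (window_oc a) = (1 - 'X^(a + m)) * parts_poly (window_oo a).
Proof.
move=> lt_K; rewrite /parts_poly (bigD1 (Ordinal lt_K)) /=; last by rewrite inE /=; lia.
congr (_ * _); apply: eq_bigl => i; rewrite !inE -val_eqE /=.
by apply/idP/idP; lia.
Qed.

Lemma parts_poly_oc_bottom a : (a + m < K)%N ->
  parts_poly (window_oc a) = (1 - 'X^(a.+1)) * parts_poly (window_oo a.+1).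
Proof.
move=> lt_K; have lt_K' : (a.+1 < K)%N by lia.
rewrite /parts_poly (bigD1 (Ordinal lt_K')) /=; last by rewrite inE /=; lia.
congr (_ * _); apply: eq_bigl => i; rewrite !inE -val_eqE /=.
by apply/idP/idP; lia.
Qed.

Definition window_series k := \sum_(a < k) 'X^(a + m) * parts_poly (window_oo a).

Lemma window_series_telescope k : (k + m <= K)%N ->
  (1 - 'X^m) * window_series k = 'X^m * ((1 - 'X^k) * parts_poly (window_oo k)).
Proof.
elim: k => [|k IHk] le_K.
  by rewrite /window_series big_ord0 expr0 subrr mulr0 mul0r mulr0.
rewrite /window_series big_ord_recr /= mulrDr -/(window_series k) IHk; last lia.
rewrite -parts_poly_oc_bottom; last lia.
rewrite parts_poly_oc_top; last lia.
by rewrite exprD; ring.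
Qed.

Lemma coef_window_series N : (m <= K)%N -> (N < K)%N ->
  (window_series (K - m))`_N = ((m %| N) && (0 < N))%N%:R.
Proof.
move=> le_mK; set G := window_series (K - m).
have rec M : (M < K)%N -> G`_M =
    if (M < m)%N then 0 else G`_(M - m) + (M - m == 0)%N%:R.
  move=> lt_MK.
  have := congr1 (fun p : {poly R} => p`_M) (window_series_telescope (k:=K - m) _).
  rewrite subnK // => /(_ (leqnn K)).
  rewrite mulrBl mul1r coefB !coefXnM mulrBl mul1r coefB coefXnM -/G.
  case: ltnP => le_mM; first by rewrite subr0.
  rewrite coef_parts_poly_small; last by move=> i; rewrite inE; lia.
  have -> : (M - m < K - m)%N by lia.
  by rewrite subr0 => /eqP; rewrite subr_eq => /eqP ->; rewrite addrC.
elim/ltn_ind: N => N IHN lt_NK; rewrite rec //.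
case: ltnP => le_mN.
  have [->|N_gt0] := posnP N; first by rewrite andbF.
  by have -> : (m %| N)%N = false by apply/negbTE/negP => /(dvdn_leq N_gt0); lia.
rewrite IHN; [|lia|lia].
have [->|neq_Nm] := eqVneq N m; first by rewrite subnn andbF dvdnn m_gt0 add0r.
have -> : (N - m == 0)%N = false by lia.
by rewrite addr0 dvdn_subl ?dvdnn //; congr ((_ && _)%:R); lia.
Qed.

End PartsPoly.

Section PartBounds.
Variable n : nat.
Implicit Types (A : {set 'I_n.+1}) (i : 'I_n.+1).

Lemma lpart_ub A i : i \in A -> (i <= lpart A)%N.
Proof. by move=> iA; rewrite /lpart (bigD1 i) //= leq_maxl. Qed.

Lemma lpart_mem A : A != set0 -> exists2 i, i \in A & (i : nat) = lpart A.
Proof.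
rewrite -card_gt0 => A_gt0; have [i iA Ei] := eq_bigmax_cond (fun i => i : nat) A_gt0.
by exists i => //; rewrite /lpart Ei.
Qed.

Lemma spart_lb A i : i \in A -> (spart A <= i)%N.
Proof.
move=> iA; have : i \in [seq j <- index_enum 'I_n.+1 | j \in A].
  by rewrite mem_filter iA mem_index_enum.
rewrite /spart -big_filter; elim: [seq j <- _ | _] => // j s IHs.
rewrite big_cons inE => /orP [/eqP ->|/IHs le_s]; first exact: geq_minl.
exact: leq_trans (geq_minr _ _) le_s.
Qed.

Lemma spart_mem A : A != set0 -> exists2 i, i \in A & (i : nat) = spart A.
Proof.
move=> A_nz.
have : (spart A == n) || [exists i in A, (i : nat) == spart A].
  rewrite /spart; apply: (big_ind (fun x => (x == n) || [exists i in A, (i : nat) == x])).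
  - by rewrite eqxx.
  - by move=> x y /= Hx Hy; rewrite /minn; case: ifP.
  - by move=> i iA; apply/orP; right; apply/exists_inP; exists i.
case/orP => [/eqP Es|/exists_inP [i iA /eqP Ei]]; last by exists i.
case/set0Pn: A_nz => i iA; exists i => //.
by have := spart_lb iA; have := ltn_ord i; lia.
Qed.

Lemma spart_le_lpart A : A != set0 -> (spart A <= lpart A <= n)%N.
Proof.
move=> A_nz; have [j jA <-] := lpart_mem A_nz.
by rewrite (spart_lb jA) -ltnS ltn_ord.
Qed.

End PartBounds.

Section WindowCount.
Variables (R : comNzRingType) (n m : nat).
Hypothesis m_gt0 : (0 < m)%N.
Implicit Types (A : {set 'I_n.+1}).
Local Notation window_oc := (window_oc n.+1 m).
Local Notation window_oo := (window_oo n.+1 m).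

Definition fits_window A := ((lpart A - spart A < m) && (m <= lpart A))%N.

Lemma subset_window A a : A != set0 ->
  ((A \subset window_oc a) = (a < spart A) && (lpart A <= a + m))%N *
  ((A \subset window_oo a) = (a < spart A) && (lpart A < a + m))%N.
Proof.
move=> A_nz; have [i iA Ei] := spart_mem A_nz; have [j jA Ej] := lpart_mem A_nz.
by split; apply/subsetP/andP => [sA|[lt_a le_l] k kA];
  [have := sA i iA; have := sA j jA; rewrite !inE; lia
  |rewrite inE; have := spart_lb kA; have := lpart_ub kA; lia
  |have := sA i iA; have := sA j jA; rewrite !inE; lia
  |rewrite inE; have := spart_lb kA; have := lpart_ub kA; lia].
Qed.

Lemma sum_ord_eq_nat k x : \sum_(a < k) ((a : nat) == x)%:R = (x < k)%:R :> R.
Proof.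
elim: k => [|k IHk]; first by rewrite big_ord0.
by rewrite big_ord_recr /= IHk ltnS; case: ltngtP; rewrite ?addr0 ?add0r.
Qed.

(* Only the window starting at a = lpart A - m separates the two subset tests. *)
Lemma fits_window_telescope A : (fits_window A)%:R =
  \sum_(a < n.+1 - m) ((A \subset window_oc a)%:R - (A \subset window_oo a)%:R) :> R.
Proof.
have [->|A_nz] := eqVneq A set0.
  rewrite /fits_window /lpart big_set0 (leqNgt m 0) m_gt0 andbF.
  by rewrite big1 // => a _; rewrite !sub0set subrr.
have /andP[le_sl le_ln] := spart_le_lpart A_nz.
rewrite (eq_bigr (fun a : 'I_(n.+1 - m) =>
    ((a : nat) == lpart A - m)%N%:R * (fits_window A)%:R)); last first.
  have natr_subb (b b' : bool) : (b' -> b) -> b%:R - b'%:R = (b && ~~ b')%:R :> R.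
    by case: b; case: b' => //= b'b; rewrite ?subrr ?subr0 //; have := b'b isT.
  move=> a _; rewrite !subset_window // natr_subb => [|/andP[? ?]]; last by apply/andP; lia.
  by rewrite -natrM mulnb /fits_window; congr (_%:R); lia.
rewrite -mulr_suml sum_ord_eq_nat.
case: (boolP (fits_window A)) => [fitA|_]; last by rewrite mulr0.
by rewrite mulr1 /fits_window in fitA *; congr (_%:R); lia.
Qed.

Lemma signed_subset_count (I : {set 'I_n.+1}) N : ord0 \notin I ->
  \sum_(A : {set 'I_n.+1} | (ord0 \notin A) && (\sum_(i in A) (i : nat) == N)%N)
     (-1) ^+ #|A| * (A \subset I)%:R = (parts_poly R I)`_N.
Proof.
move=> I0; rewrite coef_parts_poly big_mkcond [RHS]big_mkcond; apply: eq_bigr => A _.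
case sAI: (A \subset I); last by rewrite /= mulr0; case: ifP.
by rewrite (contra (subsetP sAI ord0) I0) /= mulr1.
Qed.

Definition window_count N :=
  \sum_(A : {set 'I_n.+1} | (ord0 \notin A) && (\sum_(i in A) (i : nat) == N)%N)
     (-1) ^+ #|A|.-1 * (fits_window A)%:R :> R.

Lemma window_count_coef N : window_count N = (window_series R n.+1 m (n.+1 - m))`_N.
Proof.
rewrite /window_count (eq_bigr (fun A => - ((-1) ^+ #|A| *
    \sum_(a < n.+1 - m) ((A \subset window_oc a)%:R - (A \subset window_oo a)%:R))));
  last first.
  move=> A _; rewrite -fits_window_telescope.
  have [->|A_nz] := eqVneq A set0.
    by rewrite /fits_window /lpart big_set0 (leqNgt m 0) m_gt0 andbF !mulr0 oppr0.
  move: A_nz; rewrite -card_gt0.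
  by case: #|A| => // k _; rewrite exprS mulN1r mulNr opprK.
rewrite sumrN; under eq_bigr => A _ do rewrite mulr_sumr.
rewrite exchange_big /= /window_series coef_sum -sumrN; apply: eq_bigr => a _.
under eq_bigr => A _ do rewrite mulrBr.
have lt_a : (a + m < n.+1)%N by have := ltn_ord a; lia.
rewrite sumrB !signed_subset_count ?inE // parts_poly_oc_top //.
by rewrite mulrBl mul1r coefB addrAC subrr add0r opprK.
Qed.

Lemma window_count_dvd : (m <= n)%N -> window_count n = (m %| n)%:R.
Proof.
move=> le_mn; have n_gt0 : (0 < n)%N by lia.
by rewrite window_count_coef coef_window_series //; [rewrite n_gt0 andbT|lia].
Qed.

End WindowCount.

Section Summation.
Variable R : comNzRingType.

Lemma big_nat_indicator a b N (F : nat -> R) : (a <= b <= N)%N ->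
  \sum_(a <= i < b) F i = \sum_(i < N) ((a <= i) && (i < b))%N%:R * F i.
Proof.
case/andP => le_ab le_bN.
rewrite -(big_mkord xpredT (fun i => ((a <= i) && (i < b))%N%:R * F i)).
rewrite (big_cat_nat (m:=0) (n:=a) (p:=N)) ?(leq_trans le_ab) //=.
rewrite (big_cat_nat (m:=a) (n:=b) (p:=N)) //=.
rewrite [X in X + _]big1_seq => [|i]; last first.
  by rewrite mem_index_iota /= => lt_ia; rewrite leqNgt lt_ia mul0r.
rewrite [X in _ + (_ + X)]big1_seq => [|i]; last first.
  by rewrite mem_index_iota /= => /andP[le_bi _]; rewrite ltnNge le_bi andbF mul0r.
rewrite add0r addr0; apply: eq_big_seq => i.
by rewrite mem_index_iota => ->; rewrite mul1r.
Qed.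

Lemma big_divisors_ord n (g : nat -> R) : (0 < n)%N ->
  \sum_(d <- divisors n) g d = \sum_(d < n.+1) (d %| n)%:R * g d.
Proof.
move=> n_gt0.
rewrite (perm_big [seq d <- index_iota 0 n.+1 | (d %| n)%N]); last first.
  apply: uniq_perm; [exact: divisors_uniq | exact/filter_uniq/iota_uniq |].
  move=> d; rewrite -dvdn_divisors // mem_filter mem_index_iota /=.
  by case: (boolP (d %| n)%N) => //= dvd_dn; rewrite ltnS dvdn_leq.
rewrite big_filter big_mkcond big_mkord; apply: eq_bigr => i _.
by case: ifP; rewrite ?mul1r ?mul0r.
Qed.

Lemma sum_shifted_window n (A : {set 'I_n.+1}) (g : nat -> R) : A != set0 ->
  \sum_(1 <= j < (spart A).+1) g (lpart A - spart A + j)%N =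
  \sum_(m < n.+1) (fits_window m A)%:R * g m.
Proof.
move=> A_nz; have /andP[le_sl le_ln] := spart_le_lpart A_nz.
rewrite (eq_bigr (fun m : 'I_n.+1 =>
    (((lpart A - spart A).+1 <= m) && (m < (lpart A).+1))%N%:R * g m)); last first.
  by move=> m _; rewrite ltnS.
rewrite -big_nat_indicator; last by lia.
rewrite -[(lpart A - spart A).+1]add1n big_addn.
have -> : ((lpart A).+1 - (lpart A - spart A) = (spart A).+1)%N by lia.
by apply: eq_bigr => j _; rewrite addnC.
Qed.

End Summation.

Theorem theorem2p1 (c z : R[i]) (n : nat) (hn : (0 < n)%N) :
  \sum_(A : {set 'I_n.+1} | is_distinct_partition A)
     (-1) ^+ (nparts A).-1 *
     \sum_(1 <= j < (spart A).+1)
        natcpow (lpart A - spart A + j) z * c ^+ (lpart A - spart A + j)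
  = sigma_zc z c n.
Proof.
set g := fun k : nat => natcpow k z * c ^+ k.
rewrite /sigma_zc -/g big_divisors_ord //.
under eq_bigr => A /andP[_ /eqP sumA].
  have A_nz : A != set0 by apply: contra_eq_neq sumA => ->; rewrite big_set0; lia.
  rewrite (sum_shifted_window g A_nz) mulr_sumr.
over.
rewrite exchange_big /=; apply: eq_bigr => m _.
under eq_bigr => A _ do rewrite mulrA.
rewrite -mulr_suml; congr (_ * _).
have [m0|m_gt0] := posnP m.
  rewrite m0 dvd0n (gtn_eqF hn) big1 // => A _.
  by rewrite /fits_window ltn0 mulr0.
have le_mn : (m <= n)%N by have := ltn_ord m; have := dvdn_leq hn; lia.
by rewrite -window_count_dvd.
Qed.
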